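(* For every compact ordered space $X$, the convex Vietoris hyperspace $\mathbb{V}^{\mathrm{c}}X$ (with its topology and the Egli–Milner order) is a compact ordered space.
   Context: A compact ordered space is a compact Hausdorff space equipped with a partial order that is a closed subset of $X\times X$ (product topology). For a subset $Y$ of a poset, $\uparrow Y$ and $\downarrow Y$ are its up-closure and down-closure; $Y$ is convex if $y_1\le x\le y_2$ with $y_1,y_2\in Y$ implies $x\in Y$; $\updownarrow Y=\uparrow Y\cap\downarrow Y$. For a compact ordered space $X$, $\mathbb{V}^{\mathrm{c}}X$ is the set of closed convex subsets of $X$ (including $\varnothing$), with the topology generated by the sets $\Diamond U=\{K\mid K\cap U\neq\varnothing\}$ and $\Box U=\{K\mid K\subseteq U\}$ for $U$ ranging over open upsets and open downsets of $X$, and ordered by the Egli–Milner order: $K\le_{\mathrm{EM}}L$ iff $\uparrow L\subseteq\uparrow K$ and $\downarrow K\subseteq\downarrow L$. *)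

From HB Require Import structures.
From mathcomp Require Import all_boot all_order all_algebra.
From mathcomp Require Import all_classical all_reals all_analysis.
Set Implicit Arguments. Unset Strict Implicit. Unset Printing Implicit Defensive.
Local Open Scope classical_set_scope.

Definition upc {T : Type} (le : T -> T -> Prop) (Y : set T) : set T :=
  [set x | exists2 y, Y y & le y x].
Definition downc {T : Type} (le : T -> T -> Prop) (Y : set T) : set T :=
  [set x | exists2 y, Y y & le x y].
Definition is_upset {T : Type} (le : T -> T -> Prop) (Y : set T) : Prop :=
  forall x y, Y x -> le x y -> Y y.
Definition is_downset {T : Type} (le : T -> T -> Prop) (Y : set T) : Prop :=
  forall x y, Y y -> le x y -> Y x.
Definition convex_set {T : Type} (le : T -> T -> Prop) (Y : set T) : Prop :=
  forall y1 x y2, Y y1 -> Y y2 -> le y1 x -> le x y2 -> Y x.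

Definition compact_ordered_space (X : topologicalType) (le : X -> X -> Prop)
  : Prop :=
  hausdorff_space X /\ compact [set: X] /\
  (forall x, le x x) /\
  (forall x y, le x y -> le y x -> x = y) /\
  (forall x y z, le x y -> le y z -> le x z) /\
  closed [set p : X * X | le p.1 p.2].

Definition VC (X : topologicalType) (le : X -> X -> Prop) : Type :=
  {K : set X | closed K /\ convex_set le K}.

HB.instance Definition _ X le := gen_eqMixin (@VC X le).
HB.instance Definition _ X le := gen_choiceMixin (@VC X le).

(* Index type of the subbase: (true, U) stands for Diamond U,
   (false, U) for Box U. *)
Definition VCidx (X : topologicalType) : Type := (bool * set X)%type.
HB.instance Definition _ X := gen_eqMixin (VCidx X).
HB.instance Definition _ X := gen_choiceMixin (VCidx X).
HB.instance Definition _ X := isPointed.Build (VCidx X) (true, setT).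

Definition VC_subbase_dom (X : topologicalType) (le : X -> X -> Prop)
  : set (VCidx X) :=
  [set i | open i.2 /\ (is_upset le i.2 \/ is_downset le i.2)].

Definition Diamond (X : topologicalType) (le : X -> X -> Prop) (U : set X)
  : set (VC le) := [set K | exists2 x, proj1_sig K x & U x].
Definition Box (X : topologicalType) (le : X -> X -> Prop) (U : set X)
  : set (VC le) := [set K | proj1_sig K `<=` U].

Arguments Diamond {X} le U.
Arguments Box {X} le U.

Definition VC_subbase (X : topologicalType) (le : X -> X -> Prop)
  (i : VCidx X) : set (VC le) :=
  if i.1 then Diamond le i.2 else Box le i.2.

Arguments VC_subbase {X} le i.

HB.instance Definition _ X le :=
  @isSubBaseTopological.Build (@VC X le) (VCidx X)
    (VC_subbase_dom le) (VC_subbase le).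

Definition le_EM (X : topologicalType) (le : X -> X -> Prop)
  (K L : VC le) : Prop :=
  upc le (proj1_sig L) `<=` upc le (proj1_sig K) /\
  downc le (proj1_sig K) `<=` downc le (proj1_sig L).

Arguments le_EM {X} le K L.

From Pilot Require Import Defs.
From HB Require Import structures.
From mathcomp Require Import all_boot all_order all_algebra.
From mathcomp Require Import all_classical all_reals all_analysis.
Set Implicit Arguments. Unset Strict Implicit. Unset Printing Implicit Defensive.
Local Open Scope classical_set_scope.

(* The key tool is Nachbin's separation property of X: a closed upset and a
   disjoint closed downset have disjoint open upset and open downset
   neighbourhoods.  It follows from normality of compact Hausdorff spaces,
   once we know that the up-closure of a closed set is closed (it is a
   projection of a compact subset of X * X).
   Since a closed convex set K equals (up K) `&` (down K), a point outside K
   lies outside up K or outside down K; Nachbin separation then produces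
   subbasic open sets Diamond V and Box U of the hyperspace which tell K apart
   from other sets.  This gives the Hausdorff property of VC X and the
   closedness of each half of the Egli-Milner order.  Compactness is proved
   with ultrafilters: an ultrafilter F converges to the set of points x all
   of whose admissible neighbourhoods U satisfy F (Diamond U); the Box half of
   this convergence is a compactness argument in X.  Finally the order axioms
   of le_EM are immediate, antisymmetry again by convexity. *)

Lemma flip_closed (X : topologicalType) (R : X -> X -> Prop) :
  closed [set p : X * X | R p.1 p.2] -> closed [set p : X * X | R p.2 p.1].
Proof.
move=> clR.
have -> : [set p : X * X | R p.2 p.1] =
    (@unstable.swap X X) @^-1` [set p : X * X | R p.1 p.2] by [].
by apply: (proj1 (continuous_closedP _)) clR; exact: swap_continuous.
Qed.

(* In a compact Hausdorff space the image of a closed set under a closed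
   relation is closed: it is the second projection of a compact subset of
   X * X. *)
Lemma upc_closed (X : topologicalType) (R : X -> X -> Prop) (F : set X) :
  hausdorff_space X -> compact [set: X] ->
  closed [set p : X * X | R p.1 p.2] -> closed F -> closed (upc R F).
Proof.
move=> hX cX clR clF.
have -> : upc R F = snd @` ((F `*` setT) `&` [set p : X * X | R p.1 p.2]).
  apply/seteqP; split => [x [y Fy Ryx]|_ [[y x] [[/= Fy _] Ryx] <-]].
    by exists (y, x).
  by exists y.
apply: compact_closed => //; apply: continuous_compact.
  by apply: continuous_subspaceT => p; exact: cvg_snd.
apply: compact_closedI => //; apply: compact_setX => //.
exact: (subclosed_compact clF cX).
Qed.

Lemma normal_separation (X : topologicalType) (A B : set X) :
  hausdorff_space X -> compact [set: X] -> closed A -> closed B ->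
  (forall x, A x -> B x -> False) ->
  exists WA WB, [/\ open WA, open WB, A `<=` WA, B `<=` WB &
     forall x, WA x -> WB x -> False].
Proof.
move=> hX cX clA clB dAB.
have nbhs_notB : set_nbhs A (~` B).
  apply/set_nbhsP; exists (~` B); split.
  - by rewrite openC.
  - by move=> x Ax Bx; exact: dAB Ax Bx.
  - by [].
have [C AC clCB] := compact_normal hX cX clA nbhs_notB.
exists (interior C), (~` closure C); split.
- exact: open_interior.
- by rewrite openC; exact: closed_closure.
- by move=> x Ax; exact: AC.
- by move=> x Bx /clCB.
- by move=> x /interior_subset Cx; apply; exact: subset_closure.
Qed.

Section ClosedPreorder.
Context (X : topologicalType) (R : X -> X -> Prop).
Hypothesis (hX : hausdorff_space X) (cX : compact [set: X]).
Hypothesis R_refl : forall x, R x x.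
Hypothesis R_trans : forall x y z, R x y -> R y z -> R x z.
Hypothesis R_closed : closed [set p : X * X | R p.1 p.2].

Lemma upc_upset (S : set X) : is_upset R (upc R S).
Proof. by move=> x y [s Ss Rsx] Rxy; exists s => //; exact: R_trans Rxy. Qed.

Lemma downc_downset (S : set X) : is_downset R (downc R S).
Proof. by move=> x y [s Ss Rys] Rxy; exists s => //; exact: R_trans Rys. Qed.

Lemma downc_closed (F : set X) : closed F -> closed (downc R F).
Proof. exact: (@upc_closed _ (fun a b => R b a) F hX cX (flip_closed R_closed)).
Qed.

Lemma open_upset_between (A W : set X) :
  closed A -> is_upset R A -> open W -> A `<=` W ->
  exists U, [/\ open U, is_upset R U, A `<=` U & U `<=` W].
Proof.
move=> clA upA oW AW.
exists (~` downc R (~` W)); split.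
- by rewrite openC; apply: downc_closed; exact: open_closedC.
- move=> x y nx Rxy [w nWw Ryw]; apply: nx; exists w => //; exact: R_trans Ryw.
- move=> a Aa [w nWw Raw]; apply: nWw; apply: AW; exact: upA Raw.
- move=> x nx; apply: contrapT => nWx; apply: nx; exists x => //.
Qed.

End ClosedPreorder.

Section ConvexVietoris.
Context (X : topologicalType) (le : X -> X -> Prop).
Hypothesis (hX : hausdorff_space X) (cX : compact [set: X]).
Hypothesis le_reflexive : forall x, le x x.
Hypothesis le_transitive : forall x y z, le x y -> le y z -> le x z.
Hypothesis le_closed : closed [set p : X * X | le p.1 p.2].

Lemma nachbin_separation (A B : set X) :
  closed A -> is_upset le A -> closed B -> is_downset le B ->
  (forall x, A x -> B x -> False) ->
  exists U V, [/\ open U, is_upset le U, open V & is_downset le V] /\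
     [/\ A `<=` U, B `<=` V & forall x, U x -> V x -> False].
Proof.
move=> clA upA clB dnB dAB.
have [WA [WB [oA oB AWA BWB dW]]] := normal_separation hX cX clA clB dAB.
have [U [oU upU AU UWA]] := open_upset_between hX cX le_reflexive
  le_transitive le_closed clA upA oA AWA.
have [V [oV upV BV VWB]] := @open_upset_between _ (fun a b => le b a) hX cX
  le_reflexive (fun x y z h1 h2 => le_transitive h2 h1)
  (flip_closed le_closed) B WB clB (fun x y Bx lyx => dnB _ _ Bx lyx) oB BWB.
exists U, V; split; split => //.
- by move=> x y Vy lxy; exact: upV lxy.
- by move=> x /UWA + /VWB; exact: dW.
Qed.

Lemma separate_from_upc (L : set X) x : closed L -> ~ upc le L x ->
  exists U V, [/\ open U, is_upset le U, open V & is_downset le V] /\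
     [/\ L `<=` U, V x & forall y, U y -> V y -> False].
Proof.
move=> clL nx.
have disj z : upc le L z -> downc le [set x] z -> False.
  move=> [l Ll llz] [_ -> lzx]; apply: nx; exists l => //.
  exact: le_transitive lzx.
have cl_x : closed [set x].
  exact: accessible_closed_set1 (hausdorff_accessible hX) x.
have [U [V [[oU uU oV dV] [LU xV dUV]]]] := nachbin_separation
  (upc_closed hX cX le_closed clL) (upc_upset le_transitive (S := L))
  (downc_closed hX cX le_closed cl_x)
  (downc_downset le_transitive (S := [set x])) disj.
exists U, V; split; split => //.
- by move=> l Ll; apply: LU; exists l.
- by apply: xV; exists x.
Qed.

Lemma separate_from_downc (L : set X) x : closed L -> ~ downc le L x ->
  exists U V, [/\ open U, is_upset le U, open V & is_downset le V] /\
     [/\ U x, L `<=` V & forall y, U y -> V y -> False].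
Proof.
move=> clL nx.
have disj z : upc le [set x] z -> downc le L z -> False.
  move=> [_ -> lxz] [l Ll lzl]; apply: nx; exists l => //.
  exact: le_transitive lzl.
have cl_x : closed [set x].
  exact: accessible_closed_set1 (hausdorff_accessible hX) x.
have [U [V [[oU uU oV dV] [xU LV dUV]]]] := nachbin_separation
  (upc_closed hX cX le_closed cl_x) (upc_upset le_transitive (S := [set x]))
  (downc_closed hX cX le_closed clL) (downc_downset le_transitive (S := L))
  disj.
exists U, V; split; split => //.
- by apply: xU; exists x.
- by move=> l Ll; apply: LV; exists l.
Qed.

Definition admissible (U : set X) : Prop :=
  open U /\ (is_upset le U \/ is_downset le U).

Lemma subbase_open i : VC_subbase_dom le i -> open (VC_subbase le i).
Proof.
move=> Di; exists [set VC_subbase le i]; last by rewrite bigcup_set1.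
by move=> _ ->; exact: finI_from1.
Qed.

Lemma Diamond_open U : admissible U -> open (Diamond le U).
Proof. exact: (@subbase_open (true, U)). Qed.

Lemma Box_open U : admissible U -> open (Box le U).
Proof. exact: (@subbase_open (false, U)). Qed.

Lemma cvg_subbase (F : set_system (VC le)) (K : VC le) : Filter F ->
  (forall i, VC_subbase_dom le i -> VC_subbase le i K -> F (VC_subbase le i)) ->
  F --> K.
Proof.
move=> FF HF B [B' [[D' sD' <-] [A D'A AK] sB]].
have [E sE AE] := sD' _ D'A.
apply: (filterS sB); apply: (@filterS _ _ _ A); first by move=> y Ay; exists A.
rewrite -AE; apply: filter_bigI => j jE; apply: HF.
  exact: set_mem (sE j jE).
by move: AK; rewrite -AE; apply.
Qed.

Lemma VC_closed (K : VC le) : closed (proj1_sig K).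
Proof. by case: K => ? []. Qed.

Lemma VC_ext (K L : VC le) : proj1_sig K = proj1_sig L -> K = L.
Proof.
case: K L => K hK [L hL] /= eKL; subst L; congr exist; exact: Prop_irrelevance.
Qed.

Lemma VC_upc_downc (K : VC le) x :
  upc le (proj1_sig K) x -> downc le (proj1_sig K) x -> proj1_sig K x.
Proof.
case: K => K [_ cvK] /= [a Ka lax] [b Kb lxb]; exact: cvK Ka Kb lax lxb.
Qed.

Lemma VC_separate (K L : VC le) x : proj1_sig K x -> ~ proj1_sig L x ->
  exists P Q : set (VC le), [/\ open P, open Q, P K, Q L &
    forall M, P M -> Q M -> False].
Proof.
move=> Kx nLx.
have [nu|nd] : ~ upc le (proj1_sig L) x \/ ~ downc le (proj1_sig L) x.
  apply: contrapT => /not_orP [/contrapT u /contrapT d]; apply: nLx.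
  exact: VC_upc_downc.
- have [U [V [[oU uU oV dV] [LU Vx dUV]]]] :=
    separate_from_upc (VC_closed (K := L)) nu.
  exists (Diamond le V), (Box le U); split => //.
  + by apply: Diamond_open; split => //; right.
  + by apply: Box_open; split => //; left.
  + by exists x.
  + by move=> M [y My Vy] MU; exact: dUV (MU _ My) Vy.
- have [U [V [[oU uU oV dV] [Ux LV dUV]]]] :=
    separate_from_downc (VC_closed (K := L)) nd.
  exists (Diamond le U), (Box le V); split => //.
  + by apply: Diamond_open; split => //; left.
  + by apply: Box_open; split => //; right.
  + by exists x.
  + by move=> M [y My Uy] MV; exact: dUV Uy (MV _ My).
Qed.

Lemma VC_hausdorff : hausdorff_space (VC le).
Proof.
rewrite open_hausdorff => K L nKL.
have nE : ~ (proj1_sig K `<=` proj1_sig L /\ proj1_sig L `<=` proj1_sig K).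
  move=> [KL LK]; move: nKL; suff -> : K = L by rewrite eqxx.
  by apply: VC_ext; apply/seteqP.
move: nE => /not_andP [/existsNP [x /not_implyP [Kx nLx]]|
                       /existsNP [x /not_implyP [Lx nKx]]].
- have [P [Q [oP oQ PK QL dPQ]]] := VC_separate Kx nLx.
  exists (P, Q); first by split; apply: mem_set.
  split => //; apply/eqP; rewrite -subset0 => M [PM QM]; exact: dPQ PM QM.
- have [P [Q [oP oQ PL QK dPQ]]] := VC_separate Lx nKx.
  exists (Q, P); first by split; apply: mem_set.
  split => //; apply/eqP; rewrite -subset0 => M [QM PM]; exact: dPQ PM QM.
Qed.

(* The upper half of the Egli-Milner order, up L `<=` up K, is closed: if l
   in L is not above K, then Box U * Diamond V with U, V separating K from l
   is a neighbourhood of (K, L) avoiding the relation. *)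
Lemma EM_upper_closed : closed [set p : VC le * VC le |
  upc le (proj1_sig p.2) `<=` upc le (proj1_sig p.1)].
Proof.
move=> [K L] clKL /= z [l Ll llz]; apply: contrapT => nKz.
have nKl : ~ upc le (proj1_sig K) l.
  by move=> [k Kk lkl]; apply: nKz; exists k => //; exact: le_transitive llz.
have [U [V [[oU uU oV dV] [KU Vl dUV]]]] :=
  separate_from_upc (VC_closed (K := K)) nKl.
have nbhs_KL : nbhs (K, L) (Box le U `*` Diamond le V).
  exists (Box le U, Diamond le V) => //; split => /=.
  + apply: open_nbhs_nbhs; split.
      by apply: Box_open; split => //; left.
    by move=> y Ky; exact: KU.
  + apply: open_nbhs_nbhs; split.
      by apply: Diamond_open; split => //; right.
    by exists l.
have [[K' L'] [/= EM [/= K'U [l' L'l' Vl']]]] := clKL _ nbhs_KL.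
have [k K'k lkl'] := EM l' (ex_intro2 _ _ l' L'l' (le_reflexive l')).
exact: dUV (uU _ _ (K'U _ K'k) lkl') Vl'.
Qed.

Lemma EM_lower_closed : closed [set p : VC le * VC le |
  downc le (proj1_sig p.1) `<=` downc le (proj1_sig p.2)].
Proof.
move=> [K L] clKL /= z [k Kk lzk]; apply: contrapT => nLz.
have nLk : ~ downc le (proj1_sig L) k.
  by move=> [l Ll lkl]; apply: nLz; exists l => //; exact: le_transitive lkl.
have [U [V [[oU uU oV dV] [Uk LV dUV]]]] :=
  separate_from_downc (VC_closed (K := L)) nLk.
have nbhs_KL : nbhs (K, L) (Diamond le U `*` Box le V).
  exists (Diamond le U, Box le V) => //; split => /=.
  + apply: open_nbhs_nbhs; split.
      by apply: Diamond_open; split => //; left.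
    by exists k.
  + apply: open_nbhs_nbhs; split.
      by apply: Box_open; split => //; right.
    by move=> y Ly; exact: LV.
have [[K' L'] [/= EM [/= [k' K'k' Uk'] L'V]]] := clKL _ nbhs_KL.
have [l L'l lkl] := EM k' (ex_intro2 _ _ k' K'k' (le_reflexive k')).
exact: dUV Uk' (dV _ _ (L'V _ L'l) lkl).
Qed.

Lemma EM_closed : closed [set p : VC le * VC le | le_EM le p.1 p.2].
Proof. exact: closedI EM_upper_closed EM_lower_closed. Qed.

(* By convexity, Egli-Milner equivalent sets are equal. *)
Lemma EM_anti (K L : VC le) : le_EM le K L -> le_EM le L K -> K = L.
Proof.
move=> [upLK downKL] [upKL downLK].
by apply: VC_ext; apply/seteqP; split => x Hx; apply: VC_upc_downc;
  [apply: upKL | apply: downKL | apply: upLK | apply: downLK]; exists x.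
Qed.

Definition limit_set (F : set_system (VC le)) : set X :=
  [set x | forall U, admissible U -> U x -> F (Diamond le U)].

Lemma limit_set_closed F : closed (limit_set F).
Proof.
move=> x clx U [oU uU] Ux.
have [y [limy Uy]] := clx U (open_nbhs_nbhs (conj oU Ux)).
exact: limy U (conj oU uU) Uy.
Qed.

Lemma limit_set_convex F : Defs.convex_set le (limit_set F).
Proof.
move=> y1 x y2 lim1 lim2 l1 l2 U [oU [uU|dU]] Ux.
- by apply: lim2 (uU _ _ Ux l2); split => //; left.
- by apply: lim1 (dU _ _ Ux l1); split => //; right.
Qed.

Definition filter_limit F : VC le :=
  exist _ (limit_set F)
    (conj (limit_set_closed (F := F)) (limit_set_convex (F := F))).

(* Box half of convergence: if an ultrafilter F avoided Box U with U open,
   the sets of points outside U met by members of F would form a proper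
   filter on the compact set ~` U; a cluster point of it lies in the limit
   set, but not in U. *)
Lemma filter_limit_Box (F : set_system (VC le)) U : UltraFilter F ->
  open U -> limit_set F `<=` U -> F (Box le U).
Proof.
move=> UF oU limU; apply: contrapT => nFU.
have FC : F (~` Box le U) by case: (in_ultra_setVsetC (Box le U) UF).
pose outside (A : set (VC le)) :=
  [set x : X | ~ U x /\ exists2 M : VC le, A M & proj1_sig M x].
pose G := filter_from F outside.
have GF : Filter G.
  apply: filter_from_filter; first by exists setT; exact: filterT.
  move=> A B FA FB; exists (A `&` B); first exact: filterI.
  by move=> x [nUx [M [AM BM] Mx]]; split; split => //; exists M.
have GP : ProperFilter G.
  apply: filter_from_proper => A FA.
  have [M [AM nBM]] : (A `&` ~` Box le U) !=set0 := filter_ex (filterI FA FC).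
  have [x Mx nUx] : exists2 x, proj1_sig M x & ~ U x.
    apply: contrapT => nex; apply: nBM => x Mx; apply: contrapT => nUx.
    by apply: nex; exists x.
  by exists x; split => //; exists M.
have GnU : G (~` U) by exists setT; [exact: filterT | move=> x []].
have cU : compact (~` U).
  by apply: (subclosed_compact _ cX) => //; exact: open_closedC.
have [x [nUx clx]] := cU G GP GnU.
apply: nUx; apply: limU => W admW Wx; apply: contrapT => nFW.
have FnW : F (~` Diamond le W) by case: (in_ultra_setVsetC (Diamond le W) UF).
have GnW : G (outside (~` Diamond le W)) by exists (~` Diamond le W).
have [y [[_ [M nWM My]] Wy]] :=
  clx _ W GnW (open_nbhs_nbhs (conj admW.1 Wx)).
by apply: nWM; exists y.
Qed.

Lemma filter_limit_cvg (F : set_system (VC le)) : UltraFilter F ->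
  F --> filter_limit F.
Proof.
move=> UF; apply: cvg_subbase => -[[] U] /= admU.
- by move=> [x limx Ux]; exact: limx U admU Ux.
- by apply: filter_limit_Box => //; exact: admU.1.
Qed.

Lemma VC_compact : compact [set: VC le].
Proof.
rewrite compact_ultra => F UF _.
by exists (filter_limit F); split => //; exact: filter_limit_cvg.
Qed.

End ConvexVietoris.

Unset Implicit Arguments.
Theorem theorem3p6 (X : topologicalType) (le : X -> X -> Prop) :
  compact_ordered_space le -> compact_ordered_space (le_EM le).
Proof.
move=> [hX [cX [refl [_ [trans cl]]]]].
split; first exact: VC_hausdorff.
split; first exact: VC_compact.
split; first by move=> K; split.
split; first exact: EM_anti.
split; last exact: EM_closed.
move=> K L M [upLK downKL] [upML downLM]; split => x Hx.
- exact: upLK (upML _ Hx).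
- exact: downLM (downKL _ Hx).
Qed.
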